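(* Let $m\ge 2$. Let $H_3$ be the graph with vertices $v_1,\dots,v_7$ whose edges are those of the $7$-cycle $v_1v_2\cdots v_7v_1$ together with $v_2v_5,v_3v_6,v_4v_7$ (it has exactly one vertex of degree $2$, namely $v_1$), and let $H_2$ be the graph with vertices $v_1,\dots,v_6$ and edges $v_1v_2,v_2v_3,v_3v_4,v_4v_5,v_5v_6,v_6v_1,v_2v_5,v_3v_6$ (it has exactly two vertices of degree $2$, namely $v_1,v_4$). Let $G$ be the cubic graph constructed from the path $P_m$ by replacing each leaf with a copy of $H_3$ and each internal vertex with a copy of $H_2$, where each edge $uv$ of $P_m$ is replaced by an edge joining a degree-$2$ vertex of the copy for $u$ to a degree-$2$ vertex of the copy for $v$, each degree-$2$ vertex being used exactly once. Then (a) $G$ is a bridged, Class $2$, triangle-free cubic graph, and (b) $c_2(G)-\left\lceil\frac{|V(G)|+2}{4}\right\rceil=\left\lfloor\frac{m}{2}\right\rfloor-1$.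
   Context: A graph is bridged if it has a bridge. A graph of maximum degree $\Delta$ is Class $1$ if its chromatic index is $\Delta$ and Class $2$ if it is $\Delta+1$. For a graph $G=(V,E)$ and $S_0\subseteq V$, the irreversible $2$-threshold conversion process sets, for $t=1,2,\dots$, $S_t=S_{t-1}\cup\{v: v \text{ has at least } 2 \text{ neighbours in } S_{t-1}\}$; $S_0$ is a $2$-conversion set if $S_t=V$ for some $t$, and $c_2(G)$ is the minimum size of a $2$-conversion set. *)

From mathcomp Require Import all_boot all_order all_algebra.
Set Implicit Arguments. Unset Strict Implicit. Unset Printing Implicit Defensive.

Section GraphNotions.
Variables (V : finType) (e : rel V).

Definition simple_graph : Prop := symmetric e /\ irreflexive e.

Definition deg (x : V) : nat := #|[set y | e x y]|.

Definition max_deg : nat := \max_(x : V) deg x.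

Definition cubic : Prop := forall x, deg x = 3.

Definition del_edge (x y : V) : rel V :=
  fun a b => e a b && ~~ (((a == x) && (b == y)) || ((a == y) && (b == x))).

Definition is_bridge (x y : V) : Prop :=
  e x y /\ n_comp e [set: V] < n_comp (del_edge x y) [set: V].

Definition bridged : Prop := exists x y, is_bridge x y.

Definition triangle_free : Prop := forall x y z, e x y -> e y z -> e z x -> False.

Definition edge_colouring (k : nat) (col : V -> V -> nat) : Prop :=
  (forall x y, e x y -> col x y = col y x /\ col x y < k) /\
  (forall x y z, e x y -> e x z -> y != z -> col x y != col x z).

Definition edge_colourable (k : nat) : Prop := exists col, edge_colouring k col.

Definition is_chromatic_index (k : nat) : Prop :=
  edge_colourable k /\ forall j, edge_colourable j -> k <= j.

Definition class2 : Prop := is_chromatic_index max_deg.+1.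

Definition conv_step (S : {set V}) : {set V} :=
  S :|: [set v | 2 <= #|[set u in S | e v u]|].

Definition conv_iter (S0 : {set V}) (t : nat) : {set V} := iter t conv_step S0.

Definition two_conversion_set (S0 : {set V}) : Prop :=
  exists t, conv_iter S0 t = [set: V].

Definition is_c2 (k : nat) : Prop :=
  (exists S0, two_conversion_set S0 /\ #|S0| = k) /\
  (forall S0, two_conversion_set S0 -> k <= #|S0|).

End GraphNotions.

Definition ceil_div (a b : nat) : nat := (a + b - 1) %/ b.

(* Vertices 0 .. 6m+1. Copy 0 = H_3 on 0..6; copies 1..m-2 = H_2 on
   7+6(c-1) .. 7+6(c-1)+5; copy m-1 = H_3 on 6m-5 .. 6m+1.
   Local labels: v_i is local index i-1. *)
Definition upair (a b i j : nat) : bool :=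
  ((a == i) && (b == j)) || ((a == j) && (b == i)).

Definition h3adj (a b : nat) : bool :=
  [&& a < 7, b < 7 &
   [|| a.+1 %% 7 == b, b.+1 %% 7 == a, upair a b 1 4, upair a b 2 5 | upair a b 3 6]].

Definition h2adj (a b : nat) : bool :=
  [&& a < 6, b < 6 &
   [|| a.+1 %% 6 == b, b.+1 %% 6 == a, upair a b 1 4 | upair a b 2 5]].

Definition copy_of (m x : nat) : nat :=
  if x < 7 then 0 else if x < 6 * m - 5 then (x - 7) %/ 6 + 1 else m - 1.

Definition local (m x : nat) : nat :=
  if x < 7 then x else if x < 6 * m - 5 then (x - 7) %% 6 else x - (6 * m - 5).

Definition is_H3 (m c : nat) : bool := (c == 0) || (c == m - 1).

Definition ladj (m x y : nat) : bool :=
  (copy_of m x == copy_of m y) &&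
  (if is_H3 m (copy_of m x) then h3adj (local m x) (local m y)
   else h2adj (local m x) (local m y)).

(* the degree-2 vertex of copy c used towards copy c+1
   (v1 for the H_3 copy 0, v4 for an H_2 copy); the one used towards c-1 is v1 *)
Definition rport (c : nat) : nat := if c == 0 then 0 else 3.

Definition conn (m x y : nat) : bool :=
  [&& copy_of m y == (copy_of m x).+1, local m x == rport (copy_of m x)
    & local m y == 0].

Definition gadj (m x y : nat) : bool := [|| ladj m x y, conn m x y | conn m y x].

Definition Gm (m : nat) : rel 'I_(6 * m + 2) := fun x y => gadj m x y.
Arguments Gm : clear implicits.

(* The copy of H_3 at the first leaf is a set of 7 vertices left by a single edge.
   That edge is therefore a bridge, and the graph is not 3-edge-colourable: in a
   3-edge-colouring of a cubic graph each colour class is a perfect matching, so a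
   colour missing from the bridge would match the 7 vertices among themselves.
   Colouring each copy with colours 0..3 so that its ports miss colour 3, and the
   edges between copies with 3, gives a 4-edge-colouring.
   For c_2(G): in a cubic graph every vertex of a 4-cycle has at most one neighbour
   off the cycle, so a 4-cycle disjoint from the initial set is never converted.
   Every copy has, for each of its vertices v, a 4-cycle avoiding v; hence a
   2-conversion set meets every copy in at least two vertices. Conversely two
   suitable vertices of each copy already convert the whole copy, so c_2(G) = 2m,
   and 2m - ceil((6m + 4) / 4) = floor(m / 2) - 1. *)

From mathcomp Require Import all_boot all_algebra.
From mathcomp Require Import zify.
Set Implicit Arguments. Unset Strict Implicit. Unset Printing Implicit Defensive.

(** * Irreversible 2-threshold conversion *)

(* [l] lists vertices in reverse order of conversion: each one is in [S] or has
   two neighbours later in [l]. *)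
Fixpoint conv_order (T : eqType) (e : rel T) (S : pred T) (l : seq T) : bool :=
  if l is x :: l' then ((x \in S) || (1 < count (e x) l')) && conv_order e S l' else true.

Lemma conv_order_map (T U : eqType) (h : rel T) (e : rel U) (A : pred T) (S : pred U)
    (f : T -> U) l :
  (forall u v, h u v -> e (f u) (f v)) -> (forall u, u \in A -> f u \in S) ->
  conv_order h A l -> conv_order e S (map f l).
Proof.
move=> hom AS; elim: l => [//|x l IHl] /= /andP[xA ol]; rewrite IHl // andbT.
case/orP: xA => [/AS -> // | two]; apply/orP; right.
by apply: leq_trans two _; rewrite count_map; apply: sub_count => u /hom.
Qed.

Section Conversion.
Variables (V : finType) (e : rel V).

Lemma conv_iter_mono (S : {set V}) t t' : t <= t' -> conv_iter e S t \subset conv_iter e S t'.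
Proof.
elim: t' => [|t' IHt']; first by rewrite leqn0 => /eqP->.
rewrite leq_eqVlt ltnS => /predU1P[-> // | /IHt' sub].
by apply: subset_trans sub _; rewrite /conv_iter iterS subsetUl.
Qed.

Lemma conv_order_sub_conv_iter (S : {set V}) l :
  uniq l -> conv_order e (fun x => x \in S) l -> {subset l <= conv_iter e S (size l)}.
Proof.
elim: l => [//|x l IHl] /= /andP[xl ul] /andP[xS ol] y.
have sub := subsetP (conv_iter_mono S (leqnSn (size l))).
rewrite inE => /predU1P[-> | yl]; last exact/sub/IHl.
rewrite inE; case/orP: xS => [xS | two].
  by rewrite (subsetP (conv_iter_mono S (leq0n (size l)))).
rewrite inE; apply/orP; right; apply: leq_trans two _.
rewrite -size_filter -(card_uniqP _) ?filter_uniq //; apply/subset_leq_card/subsetP => u.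
by rewrite mem_filter !inE => /andP[-> /(IHl ul ol)->].
Qed.

Definition trapped (C : {set V}) : Prop :=
  {in C, forall x, #|[set y | e x y] :\: C| <= 1}.

Lemma trapped_notin_conv_iter (C S : {set V}) t :
  trapped C -> {in C, forall x, x \notin S} ->
  {in C, forall x, x \notin conv_iter e S t}.
Proof.
move=> trC CS; elim: t => [//|t IHt] x xC.
rewrite /conv_iter iterS -/(conv_iter e S t) inE negb_or IHt //= inE -ltnNge ltnS.
apply: leq_trans (trC x xC); apply/subset_leq_card/subsetP => y.
by rewrite !inE => /andP[yS ->]; rewrite andbT; apply: contraL yS; apply: IHt.
Qed.

Lemma conversion_set_meets_trapped (S C : {set V}) x :
  two_conversion_set e S -> trapped C -> x \in C -> exists2 y, y \in C & y \in S.
Proof.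
move=> [t convS] trC xC.
have [/exists_inP // | /exists_inPn CS] := boolP [exists y in C, y \in S].
by have := trapped_notin_conv_iter t trC CS xC; rewrite convS inE.
Qed.

Lemma card_nbrs_outside_le1 (C : {set V}) x y z :
  cubic e -> e x y -> e x z -> y != z -> y \in C -> z \in C ->
  #|[set u | e x u] :\: C| <= 1.
Proof.
move=> cub exy exz yz yC zC.
have sub2 : [set y; z] \subset [set u | e x u] :&: C.
  by apply/subsetP => u; rewrite !inE => /orP[]/eqP->; rewrite ?exy ?exz ?yC ?zC.
have := subset_leq_card sub2; rewrite cards2 yz.
have := cardsID C [set u | e x u]; rewrite -/(deg e x) cub; lia.
Qed.

Lemma trapped_cycle4 a b c d :
  symmetric e -> cubic e -> e a b -> e b c -> e c d -> e d a ->
  uniq [:: a; b; c; d] -> trapped [set a; b; c; d].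
Proof.
move=> sym cub eab ebc ecd eda.
rewrite /= !inE !negb_or => /and4P[/and3P[ab ac ad] /andP[bc bd] cd _].
move=> x; rewrite !inE => /orP[/orP[/orP[]|]|]/eqP->;
  [ apply: (card_nbrs_outside_le1 (y := b) (z := d))
  | apply: (card_nbrs_outside_le1 (y := a) (z := c))
  | apply: (card_nbrs_outside_le1 (y := b) (z := d))
  | apply: (card_nbrs_outside_le1 (y := a) (z := c)) ];
  by rewrite // ?inE ?eqxx ?orbT // sym.
Qed.

End Conversion.

(** * Bridges and edge colourings *)

Lemma n_comp_ltn_subrel (V : finType) (e e' : rel V) x y :
  connect_sym e -> connect_sym e' -> subrel e' e ->
  e x y -> ~~ connect e' x y -> n_comp e [set: V] < n_comp e' [set: V].
Proof.
move=> sym sym' sub exy nxy.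
have sub_connect : subrel (connect e') (connect e).
  by apply: connect_sub => u v /sub; apply: connect1.
set R' := [set r | fingraph.roots e' r].
have -> : n_comp e [set: V] = #|fingraph.root e @: R'|.
  apply: eq_card => r; rewrite !inE andbT; apply/idP/imsetP => [/eqP rr | [r' _ ->]].
    exists (fingraph.root e' r); first by rewrite inE fingraph.roots_root.
    by rewrite -{1}rr; apply/(fingraph.rootP sym)/sub_connect/connect_root.
  exact: fingraph.roots_root.
have -> : n_comp e' [set: V] = #|R'| by apply: eq_card => r; rewrite !inE andbT.
rewrite ltn_neqAle leq_imset_card andbT; apply/negP => /imset_injP inj.
have rootE u : fingraph.root e (fingraph.root e' u) = fingraph.root e u.
  by apply/esym/(fingraph.rootP sym)/sub_connect/connect_root.
move/negP: nxy; apply; apply/(fingraph.rootP sym')/inj; rewrite ?inE ?fingraph.roots_root //.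
by rewrite !rootE; apply/(fingraph.rootP sym)/connect1.
Qed.

Lemma is_bridge_of_single_cut (V : finType) (e : rel V) (X : {set V}) x y :
  symmetric e -> e x y -> x \in X -> y \notin X ->
  (forall u v, e u v -> u \in X -> v \notin X -> u = x /\ v = y) -> is_bridge e x y.
Proof.
move=> sym exy xX yX cut; split=> //.
have sym' : symmetric (del_edge e x y).
  by move=> u v; rewrite /del_edge sym orbC; congr (_ && ~~ (_ || _)); rewrite andbC.
apply: (n_comp_ltn_subrel (sym_connect_sym sym) (sym_connect_sym sym') _ exy).
  by move=> u v /andP[].
have closedX : closed (del_edge e x y) X.
  apply: (intro_closed (sym_connect_sym sym')) => u v /andP[euv uv] uX.
  apply: contraNT uv => vX; have [-> ->] := cut u v euv uX vX; by rewrite !eqxx.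
by apply/negP => /(closed_connect closedX); rewrite xX (negbTE yX).
Qed.

Lemma even_card_involution (V : finType) (X : {set V}) (f : V -> V) :
  {in X, forall u, f u \in X /\ f u != u} -> {in X, involutive f} -> ~~ odd #|X|.
Proof.
elim: {X}_.+1 {-2}X (ltnSn #|X|) => // n IHn X ltX fX invf.
have [-> | [x xX]] := set_0Vmem X; first by rewrite cards0.
have [fxX fxx] := fX x xX.
set X' := X :\ x :\ f x.
have cardX : #|X| = #|X'|.+2.
  by rewrite (cardsD1 x X) (cardsD1 (f x) (X :\ x)) xX !inE fxx fxX.
have fX' : {in X', forall u, f u \in X' /\ f u != u}.
  move=> u; rewrite !inE => /and3P[ufx ux uX]; have [fuX fuu] := fX u uX.
  rewrite fuX fuu !andbT; split=> //; apply/andP; split.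
    by apply: (contraNneq _ ux) => /(congr1 f); rewrite !invf // => ->.
  by apply: (contraNneq _ ufx) => <-; rewrite invf.
have invf' : {in X', involutive f} by move=> u /setD1P[_ /setD1P[_ /invf]].
by rewrite cardX /= negbK -(negbK (odd _)) IHn //; move: ltX; rewrite cardX; lia.
Qed.

Section EdgeColouring.
Variables (V : finType) (e : rel V).

Lemma edge_colourable_leq k k' : k <= k' -> edge_colourable e k -> edge_colourable e k'.
Proof.
move=> le_kk' [col [colP proper]]; exists col; split=> // u v /colP[symc lt].
by split=> //; apply: leq_trans le_kk'.
Qed.

Lemma cubic_colour_neighbour col x i :
  cubic e -> edge_colouring e 3 col -> i < 3 -> exists2 y, e x y & col x y = i.
Proof.
move=> cub [colP proper] lti.
set s := [seq col x y | y <- enum [set y | e x y]].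
have uniq_s : uniq s.
  rewrite map_inj_in_uniq ?enum_uniq // => y z; rewrite !mem_enum !inE => exy exz.
  by apply: contra_eq => yz; apply: proper.
have sub_s : {subset s <= iota 0 3}.
  by move=> c /mapP[y]; rewrite mem_enum inE => /colP[_ lt] ->; rewrite mem_iota.
have size_s : size (iota 0 3) <= size s by rewrite size_map -cardE -/(deg e x) cub size_iota.
have [_ s_iota] := uniq_min_size uniq_s sub_s size_s.
have /mapP[y] : i \in s by rewrite s_iota mem_iota.
by rewrite mem_enum inE => exy ->; exists y.
Qed.

Lemma not_edge_colourable3_of_single_odd_cut (X : {set V}) x y :
  simple_graph e -> cubic e -> odd #|X| ->
  (forall u v, e u v -> u \in X -> v \notin X -> u = x /\ v = y) -> ~ edge_colourable e 3.
Proof.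
move=> [sym irr] cub oddX cut [col colP].
have [colS proper] := colP.
have [i lti nixy] : exists2 i, i < 3 & i != col x y.
  by case: (eqVneq (col x y) 0) => [-> | nz]; [exists 1 | exists 0; rewrite // eq_sym].
pose f u := if [pick v | e u v && (col u v == i)] is Some v then v else u.
have fP u : e u (f u) /\ col u (f u) = i.
  rewrite /f; case: pickP => [v /andP[-> /eqP ->] // | none].
  have [v euv cuv] := cubic_colour_neighbour u cub colP lti.
  by move: (none v); rewrite euv cuv eqxx.
have f_uniq u v : e u v -> col u v = i -> v = f u.
  move=> euv cuv; have [eufu cufu] := fP u; apply/eqP; apply: contraTT isT => vfu.
  by have := proper u v (f u) euv eufu vfu; rewrite cuv cufu eqxx.
apply/negP: oddX; apply: (@even_card_involution _ X f) => [u uX | u uX].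
  have [eufu cufu] := fP u; split; last by apply: contraTneq eufu => ->; rewrite irr.
  apply: contraT => fuX; have [ux fuy] := cut u (f u) eufu uX fuX.
  by move: nixy; rewrite -cufu fuy ux eqxx.
have [eufu cufu] := fP u; apply/esym/f_uniq; first by rewrite sym.
by have [<- _] := colS u (f u) eufu.
Qed.

Lemma cubic_class2 (x0 : V) :
  cubic e -> edge_colourable e 4 -> ~ edge_colourable e 3 -> class2 e.
Proof.
move=> cub col4 ncol3; have max3 : max_deg e = 3.
  apply/eqP; rewrite eqn_leq -{2}(cub x0) leq_bigmax andbT.
  by apply/bigmax_leqP => x _; rewrite cub.
rewrite /class2 max3; split=> // j colj; rewrite leqNgt; apply/negP => ltj.
by apply/ncol3/(edge_colourable_leq _ colj).
Qed.

End EdgeColouring.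

(** * The gadgets H_3 and H_2 *)

Definition hsize (b : bool) : nat := if b then 7 else 6.

Definition hadj (b : bool) (i j : nat) : bool := if b then h3adj i j else h2adj i j.

(* The vertices joined to another copy: v_1, and also v_4 in H_2. *)
Definition port (b : bool) (i : nat) : bool := (i == 0) || (i == 3) && ~~ b.

Definition hnbrs (b : bool) (i : nat) : seq nat :=
  if b then nth [::] [:: [:: 1; 6]; [:: 0; 2; 4]; [:: 1; 3; 5]; [:: 2; 4; 6]; [:: 3; 5; 1];
                         [:: 4; 6; 2]; [:: 5; 0; 3]] i
  else nth [::] [:: [:: 1; 5]; [:: 0; 2; 4]; [:: 1; 3; 5]; [:: 2; 4]; [:: 3; 5; 1];
                    [:: 4; 0; 2]] i.

Lemma hadj_hnbrs b i j : hadj b i j = (j \in hnbrs b i).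
Proof.
by case: b; do 7?[case: i => [|i]]; do 7?[case: j => [|j]];
  rewrite /hadj /hnbrs /h3adj /h2adj /= ?nth_nil ?in_nil ?andbF.
Qed.

Lemma hnbrs_bound b i j : j \in hnbrs b i -> j < hsize b.
Proof. by rewrite -hadj_hnbrs /hadj /h3adj /h2adj /hsize; case: b => /and3P[]. Qed.

Lemma hadj_sym b : symmetric (hadj b).
Proof.
have up a c k l : upair a c k l = upair c a k l by rewrite /upair orbC; congr orb; apply: andbC.
move=> i j; rewrite /hadj /h3adj /h2adj.
by case: b; rewrite andbCA orbCA ?(up i j 1 4) ?(up i j 2 5) ?(up i j 3 6).
Qed.

Lemma hadj_irr b : irreflexive (hadj b).
Proof. by move=> i; rewrite hadj_hnbrs; case: b; do 7?[case: i => [|i]]; rewrite /= ?nth_nil. Qed.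

Lemma hadj_tri b i j k : hadj b i j -> hadj b j k -> hadj b k i -> False.
Proof.
have bounded u v : hadj b u v -> (u < 7) && (v < 7).
  by rewrite /hadj /h3adj /h2adj; case: (b) => /and3P[hu hv _]; apply/andP; split; lia.
have all_tri : all (fun i => all (fun j => all (fun k =>
    ~~ [&& hadj b i j, hadj b j k & hadj b k i]) (iota 0 7)) (iota 0 7)) (iota 0 7).
  by case: (b); vm_compute.
move=> hij hjk hki; have /andP[hi hj] := bounded _ _ hij; have /andP[_ hk] := bounded _ _ hjk.
move/allP/(_ i)/(_ _)/allP/(_ j)/(_ _)/allP/(_ k)/(_ _): all_tri.
by rewrite !mem_iota hi hj hk hij hjk hki => /(_ isT isT isT).
Qed.

(* Proper edge colourings of H_3 and H_2 in which no port sees colour 3, which is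
   left for the edges between copies. *)
Definition h3col : seq (seq nat) :=
  [:: [:: 0; 0; 0; 0; 0; 0; 1]; [:: 0; 0; 1; 0; 2; 0; 0]; [:: 0; 1; 0; 0; 0; 2; 0];
      [:: 0; 0; 0; 0; 1; 0; 2]; [:: 0; 2; 0; 1; 0; 0; 0]; [:: 0; 0; 2; 0; 0; 0; 3];
      [:: 1; 0; 0; 2; 0; 3; 0]].

Definition h2col : seq (seq nat) :=
  [:: [:: 0; 0; 0; 0; 0; 1]; [:: 0; 0; 1; 0; 2; 0]; [:: 0; 1; 0; 0; 0; 2];
      [:: 0; 0; 0; 0; 1; 0]; [:: 0; 2; 0; 1; 0; 0]; [:: 1; 0; 2; 0; 0; 0]].

Definition hcol (b : bool) (i j : nat) : nat := nth 0 (nth [::] (if b then h3col else h2col) i) j.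

Lemma hcol_sym b i j : hcol b i j = hcol b j i.
Proof. by case: b; do 7?[case: i => [|i]]; do 7?[case: j => [|j]]; rewrite /hcol /= ?nth_nil. Qed.

Lemma hcol_lt b i j : hcol b i j < 4.
Proof. by case: b; do 7?[case: i => [|i]]; do 7?[case: j => [|j]]; rewrite /hcol /= ?nth_nil. Qed.

Lemma hcol_proper b i : i < hsize b ->
  all (fun j => all (fun k => (j != k) ==> (hcol b i j != hcol b i k)) (hnbrs b i)) (hnbrs b i) &&
  (port b i ==> all (fun j => hcol b i j != 3) (hnbrs b i)).
Proof. by rewrite /hsize; case: b; do 7?[case: i => [|i]]. Qed.

Definition seeds (b : bool) : seq nat := if b then [:: 2; 4] else [:: 1; 5].

Definition seed_order (b : bool) : seq nat :=
  if b then [:: 0; 6; 5; 3; 1; 4; 2] else [:: 3; 4; 2; 0; 5; 1].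

Lemma seed_order_spec (b : bool) :
  perm_eq (seed_order b) (iota 0 (hsize b)) && conv_order (hadj b) (mem (seeds b)) (seed_order b).
Proof. by case: b. Qed.

Definition cycle4_avoiding (b : bool) (v : nat) : seq nat :=
  if b then nth [:: 1; 2; 3; 4] [:: [:: 1; 2; 3; 4]; [:: 2; 3; 4; 5]; [:: 3; 4; 5; 6];
              [:: 1; 2; 5; 4]; [:: 2; 3; 6; 5]; [:: 1; 2; 3; 4]; [:: 1; 2; 3; 4]] v
  else nth [:: 1; 2; 3; 4] [:: [:: 1; 2; 3; 4]; [:: 2; 3; 4; 5]; [:: 0; 1; 4; 5];
              [:: 0; 1; 2; 5]; [:: 0; 1; 2; 5]; [:: 1; 2; 3; 4]] v.

Lemma cycle4_avoiding_spec (b : bool) (v : nat) : v < hsize b ->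
  [&& size (cycle4_avoiding b v) == 4, uniq (cycle4_avoiding b v),
      cycle (hadj b) (cycle4_avoiding b v),
      v \notin cycle4_avoiding b v & all (fun j => j < hsize b) (cycle4_avoiding b v)].
Proof. by rewrite /hsize; case: b; do 7?[case: v => [|v]]. Qed.

(** * The graph G_m *)

(* Vertex [x] of [Gm m] is coded by [dec x = (copy, local index)]; [base c] is the
   first vertex of copy [c]. *)
Definition base (c : nat) : nat := if c == 0 then 0 else (6 * c).+1.

Section GraphGm.
Variables (m : nat) (hm : 2 <= m).

Definition valid : pred (nat * nat) := fun p => (p.1 < m) && (p.2 < hsize (is_H3 m p.1)).

Definition dec (x : 'I_(6 * m + 2)) : nat * nat := (copy_of m x, local m x).

Definition enc (p : nat * nat) : 'I_(6 * m + 2) :=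
  cast_ord (esym (addn2 (6 * m))) (inord (base p.1 + p.2)).

Lemma dec_spec (x : nat) : x < 6 * m + 2 ->
  valid (copy_of m x, local m x) /\ x = base (copy_of m x) + local m x.
Proof.
move=> hx; rewrite /valid /copy_of /local /hsize /is_H3 /base /=.
have [x7|x7] := ltnP x 7; first by rewrite /=; lia.
have [xlt|xge] := ltnP x (6 * m - 5).
  have -> : ((x - 7) %/ 6 + 1 == 0) = false by lia.
  have -> : ((x - 7) %/ 6 + 1 == m - 1) = false by lia.
  by rewrite /=; split; lia.
have -> : (m - 1 == 0) = false by lia.
by rewrite eqxx orbT; split; lia.
Qed.

Lemma copy_local_base p :
  valid p -> copy_of m (base p.1 + p.2) = p.1 /\ local m (base p.1 + p.2) = p.2.
Proof.
case: p => c i /andP[/= hc]; rewrite /copy_of /local /hsize /is_H3 /base.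
have [-> /= hi | c0] := eqVneq c 0; first by rewrite hi.
have -> : (6 * c).+1 + i < 7 = false by lia.
have [-> /= hi | cm /= hi] := eqVneq c (m - 1).
  have -> : (6 * (m - 1)).+1 + i < 6 * m - 5 = false by lia.
  by split; lia.
have -> : (6 * c).+1 + i < 6 * m - 5 by lia.
by split; lia.
Qed.

Lemma val_enc p : valid p -> val (enc p) = base p.1 + p.2.
Proof.
move=> vp; rewrite /= inordK //.
case: p vp => c i /andP[/= hc]; rewrite /hsize /is_H3 /base.
by have [-> | c0] := eqVneq c 0; [|have [-> | cm] := eqVneq c (m - 1)]; rewrite /=; lia.
Qed.

Lemma encK : {in valid, cancel enc dec}.
Proof.
by move=> p vp; rewrite /dec val_enc //; have [-> ->] := copy_local_base vp; case: p vp.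
Qed.

Lemma dec_valid x : valid (dec x).
Proof. by have [] := dec_spec (ltn_ord x). Qed.

Lemma decK : cancel dec enc.
Proof.
by move=> x; apply: val_inj; rewrite val_enc ?dec_valid //; have [_ <-] := dec_spec (ltn_ord x).
Qed.

Lemma enc_inj : {in valid &, injective enc}.
Proof. by move=> p q vp vq epq; rewrite -(encK vp) -(encK vq) epq. Qed.

Definition padj (p q : nat * nat) : bool :=
  [|| (p.1 == q.1) && hadj (is_H3 m p.1) p.2 q.2,
      [&& q.1 == p.1.+1, p.2 == rport p.1 & q.2 == 0] |
      [&& p.1 == q.1.+1, q.2 == rport q.1 & p.2 == 0]].

Lemma Gm_dec x y : Gm m x y = padj (dec x) (dec y).
Proof. by []. Qed.

Lemma Gm_enc p q : valid p -> valid q -> Gm m (enc p) (enc q) = padj p q.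
Proof. by move=> vp vq; rewrite Gm_dec !encK. Qed.

Lemma padj_sym : symmetric padj.
Proof.
move=> p q; rewrite /padj; have [-> | ne] := eqVneq p.1 q.1; last by rewrite /= orbC.
by rewrite hadj_sym ltn_eqF.
Qed.

Lemma padj_irr : irreflexive padj.
Proof. by move=> p; rewrite /padj eqxx hadj_irr ltn_eqF. Qed.

Lemma padj_tri p q r : padj p q -> padj q r -> padj r p -> False.
Proof.
(* Edges between copies join consecutive copies, so a triangle lies inside one copy. *)
case: p q r => [c1 i1] [c2 i2] [c3 i3]; rewrite /padj /=.
move=> /or3P[/andP[/eqP ? h1]|/and3P[/eqP ? /eqP ? /eqP ?]|/and3P[/eqP ? /eqP ? /eqP ?]];
move=> /or3P[/andP[/eqP ? h2]|/and3P[/eqP ? /eqP ? /eqP ?]|/and3P[/eqP ? /eqP ? /eqP ?]];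
move=> /or3P[/andP[/eqP ? h3]|/and3P[/eqP ? /eqP ? /eqP ?]|/and3P[/eqP ? /eqP ? /eqP ?]];
subst; try lia; first exact: hadj_tri h1 h2 h3.
all: match goal with h : is_true (hadj _ ?a ?a) |- _ => by rewrite hadj_irr in h end.
Qed.

Definition ext (p : nat * nat) : seq (nat * nat) :=
  if p.2 == 0 then (if p.1 == 0 then [:: (1, 0)] else [:: (p.1.-1, rport p.1.-1)])
  else if (p.2 == 3) && ~~ is_H3 m p.1 then [:: (p.1.+1, 0)] else [::].

Definition nbrs (p : nat * nat) : seq (nat * nat) :=
  [seq (p.1, j) | j <- hnbrs (is_H3 m p.1) p.2] ++ ext p.

Lemma ext_fst p q : q \in ext p -> q.1 != p.1.
Proof.
rewrite /ext; case: ifP => _; [case: ifP => [/eqP-> | c0] | case: ifP => _];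
  rewrite ?inE // => /eqP-> /=; lia.
Qed.

Lemma padj_nbrs p q : p.1 < m -> q.1 < m -> padj p q = (q \in nbrs p).
Proof.
case: p q => [c i] [c' j] /= hc hc'; rewrite /padj /nbrs mem_cat /=.
have [-> | ne] := eqVneq c' c.
  have -> : ((c, j) \in ext (c, i)) = false by apply/negP => /ext_fst; rewrite eqxx.
  rewrite (mem_map (fun a b (h : (c, a) = (c, b)) => congr1 snd h)) -hadj_hnbrs.
  by rewrite ltn_eqF // !orbF.
have -> : ((c', j) \in [seq (c, j) | j <- hnbrs (is_H3 m c) i]) = false.
  by apply/negP => /mapP[k _] [] /eqP; rewrite (negbTE ne).
rewrite /ext /rport /=.
have [-> | i0] /= := eqVneq i 0.
  have [-> | c0] /= := eqVneq c 0; rewrite ?inE /=.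
    by have [-> | c1] := eqVneq c' 1; rewrite ?orbF xpair_eqE // (negbTE c1).
  rewrite andbF /= xpair_eqE andbT.
  have -> : (c == c'.+1) = (c' == c.-1) by lia.
  by case: (eqVneq c' c.-1) => [-> |].
rewrite !andbF !orbF.
have [-> | c0] /= := eqVneq c 0; first by rewrite andbF in_nil (negbTE i0) andbF.
have [_ | i3] /= := eqVneq i 3; last by rewrite andbF in_nil.
rewrite /is_H3 (negbTE c0) /=.
have [-> | cm] /= := eqVneq c (m - 1); last by rewrite inE xpair_eqE.
by rewrite in_nil; apply/negbTE; lia.
Qed.

Lemma nbrs_valid p q : valid p -> q \in nbrs p -> valid q.
Proof.
case: p => c i /andP[/= hc hi]; rewrite /nbrs mem_cat => /orP[/mapP[j /hnbrs_bound hj ->] | ].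
  by rewrite /valid /= hc.
rewrite /ext /valid /hsize /is_H3 /rport /=.
have [_ | i0] := eqVneq i 0.
  have [_ | c0] := eqVneq c 0; rewrite inE => /eqP-> /=; first by rewrite hm; case: ifP.
  by rewrite (_ : c.-1 < m); last lia; case: (c.-1 == 0); case: (c.-1 == m - 1).
have [_ | i3] := eqVneq i 3; last by [].
have [_ | c0] := eqVneq c 0; first by [].
have [_ | cm] := eqVneq c (m - 1); first by [].
by rewrite inE => /eqP-> /=; rewrite (_ : c.+1 < m); last lia; case: ifP.
Qed.

Lemma nbrs_uniq_size p : valid p -> uniq (nbrs p) /\ size (nbrs p) = 3.
Proof.
case: p => c i /andP[/= _ hi].
have hnbrs_spec :
    uniq (hnbrs (is_H3 m c) i) /\ size (hnbrs (is_H3 m c) i) = 3 - port (is_H3 m c) i.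
  by move: hi; rewrite /hsize; case: (is_H3 m c); do 7?[case: i => [|i]].
have ext_spec : uniq (ext (c, i)) /\ size (ext (c, i)) = port (is_H3 m c) i.
  by rewrite /ext /port /=; case: (i == 0); [case: (c == 0) | case: (_ && _)].
rewrite /nbrs cat_uniq size_cat size_map map_inj_uniq; last by move=> j k [].
case: hnbrs_spec ext_spec => -> -> [-> ->]; split; last by case: port.
rewrite andbT /=; apply/hasPn => q /ext_fst; apply: contra => /mapP[j _ ->].
by rewrite eqxx.
Qed.

Lemma Gm_nbrs x : [set y | Gm m x y] = [set y in map enc (nbrs (dec x))].
Proof.
apply/setP => y; rewrite !inE Gm_dec padj_nbrs;
  [| by case/andP: (dec_valid x) | by case/andP: (dec_valid y)].
apply/idP/mapP => [nxy | [q nxq ->]]; first by exists (dec y); rewrite ?decK.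
by rewrite encK //; apply: nbrs_valid (dec_valid x) nxq.
Qed.

Lemma cubic_Gm : cubic (Gm m).
Proof.
move=> x; rewrite /deg Gm_nbrs cardsE.
have [uniq_nbrs size_nbrs] := nbrs_uniq_size (dec_valid x).
rewrite (card_uniqP _) ?size_map // map_inj_in_uniq // => p q np nq.
by apply: enc_inj; apply: nbrs_valid (dec_valid x) _.
Qed.

Lemma simple_Gm : simple_graph (Gm m).
Proof. by split=> [x y | x]; rewrite !Gm_dec; [apply: padj_sym | apply: padj_irr]. Qed.

Lemma triangle_free_Gm : triangle_free (Gm m).
Proof. by move=> x y z; rewrite !Gm_dec; apply: padj_tri. Qed.

Definition copy0 : {set 'I_(6 * m + 2)} := [set u : 'I_(6 * m + 2) | u < 7].

Lemma card_copy0 : #|copy0| = 7.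
Proof.
have le7 : 7 <= 6 * m + 2 by lia.
have -> : copy0 = widen_ord le7 @: setT.
  apply/setP => u; rewrite /copy0 !inE.
  apply/idP/imsetP => [lt7 | [i _ ->]]; last exact: (ltn_ord i).
  by exists (Ordinal lt7) => //; apply: val_inj.
rewrite card_imset ?cardsT ?card_ord // => i j [] eij; exact: val_inj.
Qed.

Lemma valid00 : valid (0, 0). Proof. by rewrite /valid /=; lia. Qed.

Lemma valid10 : valid (1, 0). Proof. by rewrite /valid /hsize /=; case: ifP; lia. Qed.

Lemma copy0_single_cut u v :
  Gm m u v -> u \in copy0 -> v \notin copy0 -> u = enc (0, 0) /\ v = enc (1, 0).
Proof.
rewrite !inE -leqNgt => euv u7 v7.
have du : dec u = (0, val u) by rewrite /dec /copy_of /local u7.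
have [_ ev] := dec_spec (ltn_ord v).
have cv : copy_of m v != 0.
  by rewrite /copy_of ltnNge v7 /=; case: ifP => _; lia.
move: euv; rewrite Gm_dec du /padj /= eq_sym (negbTE cv) orbF.
case/and3P=> /eqP cv1 /eqP u0 /eqP lv0.
split; apply: val_inj; rewrite val_enc ?valid00 ?valid10 //.
by rewrite cv1 lv0 in ev.
Qed.

Lemma bridged_Gm : bridged (Gm m).
Proof.
have [sym _] := simple_Gm.
exists (enc (0, 0)), (enc (1, 0)); apply: (is_bridge_of_single_cut (X := copy0)) => //.
- by rewrite Gm_enc ?valid00 ?valid10.
- by rewrite inE val_enc ?valid00.
- by rewrite inE val_enc ?valid10.
- by move=> u v; apply: copy0_single_cut.
Qed.

Lemma not_edge_colourable3_Gm : ~ edge_colourable (Gm m) 3.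
Proof.
apply: (not_edge_colourable3_of_single_odd_cut (X := copy0)) simple_Gm cubic_Gm _ _.
  by rewrite card_copy0.
by move=> u v; apply: copy0_single_cut.
Qed.

Lemma ext_port p q : q \in ext p -> port (is_H3 m p.1) p.2.
Proof. by rewrite /ext /port; case: (p.2 == 0) => //=; case: (_ && _). Qed.

Lemma ext_single p q r : q \in ext p -> r \in ext p -> q = r.
Proof.
rewrite /ext; case: ifP => _; [case: ifP => _ | case: ifP => _];
  by rewrite ?inE // => /eqP-> /eqP->.
Qed.

Definition pcol (p q : nat * nat) : nat :=
  if p.1 == q.1 then hcol (is_H3 m p.1) p.2 q.2 else 3.

Lemma pcol_proper p q r :
  valid p -> q \in nbrs p -> r \in nbrs p -> q != r -> pcol p q != pcol p r.
Proof.
case: p => c i /andP[/= _ hi].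
have /andP[/allP inner /implyP outer] := hcol_proper hi.
rewrite /nbrs !mem_cat /pcol /=.
move=> /orP[/mapP[j hj ->] | hq] /orP[/mapP[k hk ->] | hr] ne /=.
- rewrite eqxx; apply: (implyP (allP (inner j hj) k hk)).
  by apply: contra ne => /eqP->.
- have := ext_fst hr; rewrite eq_sym => /negbTE->; rewrite eqxx.
  exact: (allP (outer (ext_port hr)) j hj).
- have := ext_fst hq; rewrite eq_sym => /negbTE->; rewrite eqxx eq_sym.
  exact: (allP (outer (ext_port hq)) k hk).
- by move: ne; rewrite (ext_single hq hr) eqxx.
Qed.

Lemma edge_colourable4_Gm : edge_colourable (Gm m) 4.
Proof.
exists (fun x y => pcol (dec x) (dec y)); split=> [x y _ | x y z].
  rewrite /pcol eq_sym; split; last by case: ifP => // _; apply: hcol_lt.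
  by case: ifP => // /eqP->; rewrite hcol_sym.
rewrite -!in_set Gm_nbrs !inE => /mapP[q xq ->] /mapP[r xr ->] ne.
have vq := nbrs_valid (dec_valid x) xq; have vr := nbrs_valid (dec_valid x) xr.
rewrite !encK //; apply: pcol_proper (dec_valid x) xq xr _.
by apply: contra ne => /eqP->.
Qed.

Lemma class2_Gm : class2 (Gm m).
Proof.
apply: (cubic_class2 (enc (0, 0))) cubic_Gm edge_colourable4_Gm not_edge_colourable3_Gm.
Qed.

Lemma Gm_enc_copy c j k : c < m -> hadj (is_H3 m c) j k -> Gm m (enc (c, j)) (enc (c, k)).
Proof.
move=> hc hjk; have [hj hk] : j < hsize (is_H3 m c) /\ k < hsize (is_H3 m c).
  by move: hjk; rewrite /hadj /h3adj /h2adj /hsize; case: is_H3 => /and3P[? ? _].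
by rewrite Gm_enc /valid /= ?hc ?hj ?hk // /padj /= eqxx hjk.
Qed.

Lemma seeds_valid c j : c < m -> j \in seeds (is_H3 m c) -> valid (c, j).
Proof. by move=> hc; rewrite /valid /= hc /hsize; case: is_H3; rewrite !inE => /orP[]/eqP->. Qed.

Definition seed_set : {set 'I_(6 * m + 2)} := [set x | (dec x).2 \in seeds (is_H3 m (dec x).1)].

Lemma seed_set_converts p : valid p -> enc p \in conv_iter (Gm m) seed_set 7.
Proof.
case: p => c i /andP[hc hi]; rewrite /= in hc hi; set b := is_H3 m c; pose f j := enc (c, j).
have /andP[order_perm order_seq] := seed_order_spec b.
have order_valid j : j \in seed_order b -> valid (c, j).
  by rewrite (perm_mem order_perm) mem_iota /valid /= hc.
have seed_in_set j : j \in seeds b -> f j \in seed_set.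
  by move=> sj; rewrite inE (encK (seeds_valid hc sj)).
have order : conv_order (Gm m) (fun x => x \in seed_set) (map f (seed_order b)).
  by apply: conv_order_map order_seq => [u v | j]; [apply: Gm_enc_copy | apply: seed_in_set].
have uniq_order : uniq (map f (seed_order b)).
  rewrite map_inj_in_uniq ?(perm_uniq order_perm) ?iota_uniq // => j k vj vk.
  by move/(enc_inj (order_valid _ vj) (order_valid _ vk)) => [].
have fi : f i \in map f (seed_order b) by apply: map_f; rewrite (perm_mem order_perm) mem_iota.
apply: (subsetP (@conv_iter_mono _ _ seed_set _ 7 _))
  (conv_order_sub_conv_iter uniq_order order fi).
by rewrite size_map (perm_size order_perm) size_iota /b /hsize; case: is_H3.
Qed.

Lemma two_conversion_set_seed_set : two_conversion_set (Gm m) seed_set.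
Proof.
exists 7; apply/setP => x; rewrite in_setT -(decK x).
by case: (dec x) (dec_valid x) => c i; apply: seed_set_converts.
Qed.

Lemma dec_copy_lt x : (dec x).1 < m.
Proof. by case/andP: (dec_valid x). Qed.

Lemma card_by_copy (A : {set 'I_(6 * m + 2)}) :
  #|A| = \sum_(c < m) #|[set x in A | (dec x).1 == c]|.
Proof.
rewrite -sum1_card (partition_big (fun x => Ordinal (dec_copy_lt x)) xpredT) //=.
apply: eq_bigr => c _; rewrite -sum1_card; apply: eq_bigl => x.
by rewrite !inE -val_eqE.
Qed.

Lemma card_seed_set_copy c : c < m -> #|[set x in seed_set | (dec x).1 == c]| = 2.
Proof.
move=> hc; set s := [seq enc (c, j) | j <- seeds (is_H3 m c)].
have -> : [set x in seed_set | (dec x).1 == c] = [set x in s].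
  apply/setP => x; rewrite !inE; apply/andP/mapP => [[sx /eqP cx] | [j sj ->]].
    by exists (dec x).2; rewrite -cx // -surjective_pairing decK.
  by rewrite (encK (seeds_valid hc sj)) /= sj eqxx.
rewrite cardsE (card_uniqP _) ?size_map; first by case: is_H3.
rewrite map_inj_in_uniq; first by case: is_H3.
by move=> j k /(seeds_valid hc) vj /(seeds_valid hc) vk /(enc_inj vj vk) [].
Qed.

Lemma card_seed_set : #|seed_set| = 2 * m.
Proof.
rewrite card_by_copy (eq_bigr (fun _ => 2)) => [|c _]; last exact: card_seed_set_copy.
by rewrite sum_nat_const card_ord mulnC.
Qed.

Lemma conversion_set_meets_copy S c v :
  two_conversion_set (Gm m) S -> valid (c, v) ->
  exists2 y, y \in S & ((dec y).1 == c) && ((dec y).2 != v).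
Proof.
move=> convS /andP[hc hv]; rewrite /= in hc hv; set b := is_H3 m c.
have := cycle4_avoiding_spec hv; case: (cycle4_avoiding b v) => [|j0 [|j1 [|j2 [|j3 []]]]] //.
case/and5P=> _ uniq_C cycle_C v_out /allP bounded.
set C := [:: j0; j1; j2; j3] in uniq_C v_out bounded.
case/and5P: cycle_C => e01 e12 e23 e30 _.
pose f j := enc (c, j).
have vC j : j \in C -> valid (c, j) by move=> /bounded hj; rewrite /valid /= hc.
have uniq_fC : uniq (map f C).
  by rewrite map_inj_in_uniq // => j k /vC vj /vC vk /(enc_inj vj vk) [].
have trapped_fC : trapped (Gm m) [set f j0; f j1; f j2; f j3].
  by apply: (trapped_cycle4 (proj1 simple_Gm) cubic_Gm) uniq_fC; apply: Gm_enc_copy.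
have f0C : f j0 \in [set f j0; f j1; f j2; f j3] by rewrite !inE eqxx.
have [y yC yS] := conversion_set_meets_trapped convS trapped_fC f0C.
exists y => //; have /mapP[j jC ->] : y \in map f C by move: yC; rewrite !inE -!orbA.
by rewrite (encK (vC j jC)) /= eqxx; apply: contraNneq v_out => <-.
Qed.

Lemma conversion_set_copy_card S c :
  two_conversion_set (Gm m) S -> c < m -> 2 <= #|[set x in S | (dec x).1 == c]|.
Proof.
move=> convS hc.
have v0 : valid (c, 0) by rewrite /valid /= hc /hsize; case: is_H3.
have [y0 y0S /andP[/eqP cy0 _]] := conversion_set_meets_copy convS v0.
have vy0 : valid (c, (dec y0).2) by rewrite -cy0 -surjective_pairing dec_valid.
have [y1 y1S /andP[/eqP cy1 ny]] := conversion_set_meets_copy convS vy0.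
have ne : y0 != y1 by apply: contraNneq ny => ->.
apply: (@leq_trans #|[set y0; y1]|); first by rewrite cards2 ne.
apply/subset_leq_card/subsetP => u; rewrite !inE => /orP[]/eqP->.
  by rewrite y0S cy0 eqxx.
by rewrite y1S cy1 eqxx.
Qed.

Lemma c2_Gm : is_c2 (Gm m) (2 * m).
Proof.
split; first by exists seed_set; split; [exact: two_conversion_set_seed_set | exact: card_seed_set].
move=> S convS; rewrite card_by_copy.
have <- : \sum_(c < m) 2 = 2 * m by rewrite sum_nat_const card_ord mulnC.
by apply: leq_sum => c _; apply: conversion_set_copy_card (ltn_ord c).
Qed.

End GraphGm.

Lemma c2_excess m : ((2 * m)%:Z - (ceil_div (6 * m + 2 + 2) 4)%:Z = (m %/ 2)%:Z - 1)%R.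
Proof. by rewrite /ceil_div; lia. Qed.

Theorem proposition5p7 (m : nat) (hm : 2 <= m) :
  [/\ simple_graph (Gm m), cubic (Gm m), bridged (Gm m),
      class2 (Gm m) & triangle_free (Gm m)] /\
  exists k : nat, is_c2 (Gm m) k /\
    ((k%:Z - (ceil_div (#|'I_(6 * m + 2)| + 2) 4)%:Z = (m %/ 2)%:Z - 1)%R).
Proof.
split; first by split; [exact: simple_Gm | exact: cubic_Gm | exact: bridged_Gm
  | exact: class2_Gm | exact: triangle_free_Gm].
by exists (2 * m); split; [exact: c2_Gm | rewrite card_ord; exact: c2_excess].
Qed.
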